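(* For all $n\ge1$, $Q_{\lambda_{\mathcal{NC}}}(\mathcal{NC}_n)\cong\mathcal{NCD}yck_n$.
   Context: A partition of $[n]$ is noncrossing if there are no $a<b<c<d$ with $a,c$ in one block and $b,d$ in another. $\mathcal{NC}_n$ is the set of noncrossing partitions of $[n]$ ordered by refinement; a cover $\pi\lessdot\sigma$ merges two blocks $B_i,B_j$, and if $\min B_i<\min B_j$ then $\lambda_{\mathcal{NC}}(\pi\lessdot\sigma)=\max\{a\in B_i:a<\min B_j\}$ (integer labels). $Q_\lambda(P)$ for an edge labeling $\lambda$ of a graded poset $P$ with $\hat 0$ having the rank two switching property (for every saturated chain $\hat0=x_0\lessdot\cdots\lessdot x_k$ and $i$ with $\lambda(x_{i-1}\lessdot x_i)<\lambda(x_i\lessdot x_{i+1})$ there is a unique $x_i'$ with $x_{i-1}\lessdot x_i'\lessdot x_{i+1}$ whose labels are those two labels swapped): $C(P)$ is the set of saturated chains from $\hat0$ ordered by inclusion; $\mathbf c_1\sim_\lambda\mathbf c_2$ iff they end at the same $y$ and are connected by quadratic exchanges (replacing $x_i$ by $x_i'$, forwards or backwards) among maximal chains of $[\hat0,y]$; $Q_\lambda(P)$ is the set of classes ordered by the transitive closure of: $X\le Y$ if some $\mathbf c\in X$, $\mathbf d\in Y$ have $\mathbf c\subseteq\mathbf d$. ($\lambda_{\mathcal{NC}}$ has this property.) Labeled Dyck paths: for a finite set $B=\{b_1<\cdots<b_j\}\subseteq[n]$, a labeled Dyck path on $B$ is a lattice path from $(0,0)$ to $(j-1,j-1)$ with unit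 north and east steps never going below $y=x$, where the bottom point $(i-1,0)$ carries the label $b_i$; equivalently it is a function $e:B\to\mathbb Z_{\ge0}$ ($e(b_i)$ = number of north steps on the line $x=i-1$) with $\sum_i e(b_i)=j-1$ and $e(b_1)+\cdots+e(b_i)\ge i$ for $1\le i\le j-1$. Merging: given labeled Dyck paths $e$ on $B$ and $f$ on $C$ with $B\cap C=\emptyset$, $b_1=\min B<\min C$, and $C$ contained in an interval $(b_i,b_{i+1})$ of consecutive elements of $B$ (with $b_{j+1}=\infty$), the merge is the labeled Dyck path $g$ on $B\cup C$ with $g=f$ on $C$, $g=e$ on $B\setminus\{b_i\}$ and $g(b_i)=e(b_i)+1$ (here $b_i=\max\{b\in B:b<\min C\}$). $\mathcal{NCD}yck_n$ is the set of collections of labeled Dyck paths whose label sets form a noncrossing partition of $[n]$, partially ordered as the reflexive-transitive closure of the relation $F\lessdot F'$ whenever $F'$ is obtained from $F$ by merging two of its labeled Dyck paths (with the resulting label sets still a noncrossing partition). *)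

From Stdlib Require Import Relations.Relation_Operators.
From mathcomp Require Import all_boot.
Set Implicit Arguments. Unset Strict Implicit. Unset Printing Implicit Defensive.

(* Generic construction Q_lambda(P) for a poset given by its cover     *)
(* relation [cov], its bottom element [z] (= 0^) and an edge labeling  *)
(* [lam] (integer labels, here natural numbers).                       *)
Section QLambda.
Variables (T : eqType) (z : T) (cov : rel T) (lam : T -> T -> nat).

(* C(P): saturated chains z = x_0 <. x_1 <. ... <. x_k, stored as the
   sequence [x_1; ...; x_k]; the full chain is [z :: val c]. *)
Definition chainT := {s : seq T | path cov z s}.

Definition full_chain (c : chainT) : seq T := z :: val c.

(* Quadratic exchange: d is obtained from c by replacing x_i (0<i<k)
   by x_i' with x_{i-1} <. x_i' <. x_{i+1} (guaranteed since d is a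
   saturated chain), where lam(x_{i-1},x_i) < lam(x_i,x_{i+1}) and the
   labels along x_{i-1},x_i',x_{i+1} are these two labels swapped. *)
Definition qexch (c d : chainT) : Prop :=
  let x := full_chain c in let y := full_chain d in
  size x = size y /\
  exists i, [/\ 0 < i, i.+1 < size x &
    (forall j, j != i -> nth z x j = nth z y j)] /\ [/\
    lam (nth z x i.-1) (nth z x i) < lam (nth z x i) (nth z x i.+1),
    lam (nth z x i.-1) (nth z y i) = lam (nth z x i) (nth z x i.+1) &
    lam (nth z y i) (nth z x i.+1) = lam (nth z x i.-1) (nth z x i)].

Definition qsim (c d : chainT) : Prop :=
  last z (val c) = last z (val d) /\ clos_refl_sym_trans chainT qexch c d.

Definition Qtype := {X : chainT -> Prop | exists c, X = qsim c}.

Definition Qrel (X Y : Qtype) : Prop :=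
  exists c d, [/\ sval X c, sval Y d & {subset full_chain c <= full_chain d}].

Definition Qle : Qtype -> Qtype -> Prop := clos_trans Qtype Qrel.

End QLambda.

(* Noncrossing partitions of [n], with [n] represented by 'I_n        *)
(* (i.e. 1..n relabeled 0..n-1, order preserved).                      *)
Section NC.
Variable n : nat.

Definition crossing (B C : {set 'I_n}) : bool :=
  [exists a : 'I_n, exists b : 'I_n, exists c : 'I_n, exists d : 'I_n,
    [&& a < b, b < c, c < d, a \in B, c \in B, b \in C & d \in C]].

Definition isNC (P : {set {set 'I_n}}) : bool :=
  partition P [set: 'I_n] &&
  [forall B in P, forall C in P, (B != C) ==> ~~ crossing B C].

Definition merge (P : {set {set 'I_n}}) (B C : {set 'I_n}) : {set {set 'I_n}} :=
  ((P :\ B) :\ C) :|: [set B :|: C].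

Definition coverNC (P Q : {set {set 'I_n}}) : bool :=
  [&& isNC P, isNC Q &
      [exists B in P, exists C in P, (B != C) && (Q == merge P B C)]].

Definition zNC : {set {set 'I_n}} := [set [set x] | x : 'I_n].

Definition smin (B : {set 'I_n}) : nat := \big[minn/n]_(a in B) val a.
Definition smaxlt (B : {set 'I_n}) (m : nat) : nat :=
  \max_(a in B | val a < m) val a.

(* lambda_NC(P <. Q) = max { a in B_i : a < min B_j }, where Q merges
   blocks B_i, B_j of P with min B_i < min B_j (0 if not a cover). *)
Definition lamNC (P Q : {set {set 'I_n}}) : nat :=
  match [pick BC : {set 'I_n} * {set 'I_n} |
           [&& BC.1 \in P, BC.2 \in P, BC.1 != BC.2,
               Q == merge P BC.1 BC.2 & smin BC.1 < smin BC.2]] with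
  | Some BC => smaxlt BC.1 (smin BC.2)
  | None => 0
  end.

(* Labeled Dyck paths and NCDyck_n.  A collection of labeled Dyck      *)
(* paths is encoded as its (noncrossing) partition of label sets P     *)
(* together with the function e : [n] -> nat whose restriction to each *)
(* block B of P is the labeled Dyck path on B.                         *)
Definition isDyck (B : {set 'I_n}) (e : {ffun 'I_n -> nat}) : bool :=
  (\sum_(a in B) e a == #|B| - 1) &&
  [forall b in B,
     (#|[set a in B | a <= b]| < #|B|) ==>
     (#|[set a in B | a <= b]| <= \sum_(a in B | a <= b) e a)].

Definition isNCD (F : {set {set 'I_n}} * {ffun 'I_n -> nat}) : bool :=
  isNC F.1 && [forall B in F.1, isDyck B F.2].

Definition NCD := {F : {set {set 'I_n}} * {ffun 'I_n -> nat} | isNCD F}.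

(* G is obtained from F by merging the Dyck paths on blocks B, C of F,
   where min B < min C and C lies strictly between b = b_i in B and the
   next element of B (if any). *)
Definition mergeD (F G : NCD) : Prop :=
  let P := (val F).1 in let e := (val F).2 in
  exists B C, [/\ B \in P, C \in P, B != C, smin B < smin C &
    exists2 b, b \in B &
      [/\ (forall c, c \in C -> b < c /\ (forall b', b' \in B -> b < b' -> c < b')),
          (val G).1 = merge P B C &
          (val G).2 = [ffun x => if x == b then (e x).+1 else e x]]].

Definition NCDle : NCD -> NCD -> Prop := clos_refl_trans NCD mergeD.

End NC.

Definition poset_iso (A B : Type) (leA : A -> A -> Prop) (leB : B -> B -> Prop) :=
  exists f : A -> B, bijective f /\ forall x y, leA x y <-> leB (f x) (f y).

From Pilot Require Import Defs.
From Stdlib Require Import Relations.Relation_Operators.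
From Stdlib Require Import ClassicalEpsilon ClassicalFacts.
From Stdlib Require Import FunctionalExtensionality PropExtensionality.
From mathcomp Require Import all_boot zify.
Set Implicit Arguments. Unset Strict Implicit. Unset Printing Implicit Defensive.

(* Imported again so that [merge] denotes the merge of two blocks, not [path.merge]. *)
Import Defs.

(* Send a saturated chain 0 = x_0 <. ... <. x_k to (x_k, e), where e(a) counts the edges of
   label a.  A cover of label b merges blocks B, C of a noncrossing partition with C nested in B
   right after b, which is exactly the merge of labeled Dyck paths; so the image lies in
   NCDyck_n, and since a quadratic exchange only permutes labels, the map is constant on
   ~-classes.  By the switching property every chain is equivalent to one with weakly decreasing
   labels, and such a chain is determined by its endpoint and its label multiset: the Dyck path
   on the last merged block singles out the part that was merged last.  Splitting off the step
   after the last up-step of a Dyck path shows that every element of NCDyck_n is reached.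
   Finally, covers drop the number of blocks by one, so containment of chains from 0 is prefix
   extension, which matches merging labeled Dyck paths step by step. *)

Section SeqLemmas.
Variable A : Type.
Implicit Types (u v : A) (p q w : seq A).

Lemma nth_agree_take_drop (s t : seq A) x0 k : size s = size t ->
  (forall j, j != k -> nth x0 s j = nth x0 t j) ->
  take k t = take k s /\ drop k.+1 t = drop k.+1 s.
Proof.
move=> Es H; split.
- apply: (@eq_from_nth _ x0); first by rewrite !size_take_min Es.
  move=> j; rewrite size_take_min ltn_min => /andP [jk _].
  by rewrite !nth_take //; apply/esym/H; rewrite neq_ltn jk.
- apply: (@eq_from_nth _ x0); first by rewrite !size_drop Es.
  move=> j _; rewrite !nth_drop; apply/esym/H.
  by rewrite neq_ltn ltnS leq_addr orbT.
Qed.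

Lemma nth_cons_cat (x0 : A) p u w j :
  nth x0 (x0 :: p ++ u :: w) j =
  if j <= size p then nth x0 (x0 :: p) j
  else if j == (size p).+1 then u else nth x0 w (j - (size p).+2).
Proof.
rewrite -cat_cons nth_cat /= ltnS; case: leqP=> // h.
case: eqP=> [->|ne]; first by rewrite subnn.
by have -> : j - (size p).+1 = (j - (size p).+2).+1 by lia.
Qed.

Lemma nth_cons_cat_last (x0 : A) p u w : nth x0 (x0 :: p ++ u :: w) (size p) = last x0 p.
Proof. by rewrite nth_cons_cat leqnn (nth_last x0 (x0 :: p)). Qed.

Lemma nth_cat_mid (x0 : A) p u w : nth x0 (p ++ u :: w) (size p) = u.
Proof. by rewrite nth_cat ltnn subnn. Qed.

Lemma nth_cat_next (x0 : A) p u v w : nth x0 (p ++ u :: v :: w) (size p).+1 = v.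
Proof. by rewrite nth_cat ltnNge leqnSn /= subSnn. Qed.

End SeqLemmas.

Section DisjointBigops.
Variables (R : Type) (idx : R) (op : Monoid.com_law idx) (T : finType).

Lemma big_setU_disjoint_cond (B C : {set T}) (P : pred T) (F : T -> R) :
  (forall x, x \in B -> x \in C -> False) ->
  \big[op/idx]_(a in B :|: C | P a) F a =
  op (\big[op/idx]_(a in B | P a) F a) (\big[op/idx]_(a in C | P a) F a).
Proof.
move=> dis; rewrite (big_setIDcond _ _ B); congr (op _ _); apply: eq_bigl=> i; rewrite !inE.
- by case: (i \in B); rewrite ?andbF.
- by case iB: (i \in B); case iC: (i \in C)=> //=; case: (dis i iB iC).
Qed.

Lemma big_setU_disjoint (B C : {set T}) (F : T -> R) :
  (forall x, x \in B -> x \in C -> False) ->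
  \big[op/idx]_(a in B :|: C) F a = op (\big[op/idx]_(a in B) F a) (\big[op/idx]_(a in C) F a).
Proof. by move=> dis; have := big_setU_disjoint_cond xpredT F dis; rewrite !big_condT. Qed.

Lemma big_setD1_cond (D : {set T}) c (P : pred T) (F : T -> R) : c \in D ->
  \big[op/idx]_(x in D | P x) F x =
  op (if P c then F c else idx) (\big[op/idx]_(x in D :\ c | P x) F x).
Proof.
move=> cD; rewrite -{1}(setD1K cD) big_setU_disjoint_cond.
- by rewrite big_mkcondr big_set1.
- by move=> x; rewrite !inE => /eqP -> /andP [/negP].
Qed.

End DisjointBigops.

Fixpoint ascending_pairs (l : seq nat) : nat :=
  if l is x :: l' then count (fun y => x < y) l' + ascending_pairs l' else 0.

Lemma ascending_pairs_swap p a b q : a < b ->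
  ascending_pairs (p ++ a :: b :: q) = (ascending_pairs (p ++ b :: a :: q)).+1.
Proof.
move=> ab; elim: p=> [|x p IH] /=.
- by rewrite ab ltnNge (ltnW ab) /=; lia.
- by rewrite IH !count_cat /=; lia.
Qed.

Lemma find_ascent (T : Type) (f : T -> T -> nat) s x0 : ~~ sorted geq (pairmap f x0 s) ->
  exists p u v q, s = p ++ u :: v :: q /\ f (last x0 p) u < f u v.
Proof.
elim: s x0=> [|u [|v s] IH] x0 //=.
case: (ltnP (f x0 u) (f u v))=> h; first by move=> _; exists [::], u, v, s.
move=> /(IH u) [p [u' [v' [q [E lt]]]]].
by exists (u :: p), u', v', q; rewrite E.
Qed.

Section QuadraticExchanges.
Variables (T : eqType) (z : T) (cov : rel T) (lam : T -> T -> nat).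
Local Notation chain := (chainT z cov).
Local Notation qexch := (@qexch T z cov lam).
Local Notation qsim := (@qsim T z cov lam).

Definition chain_labels (s : seq T) := pairmap lam z s.

Lemma chain_labels_cat p u v q : chain_labels (p ++ u :: v :: q) =
  chain_labels p ++ lam (last z p) u :: lam u v :: pairmap lam v q.
Proof. by rewrite /chain_labels pairmap_cat. Qed.

Lemma qexch_swap (c d : chain) p u u' v q :
  val c = p ++ u :: v :: q -> val d = p ++ u' :: v :: q ->
  lam (last z p) u < lam u v -> lam (last z p) u' = lam u v ->
  lam u' v = lam (last z p) u -> qexch c d.
Proof.
move=> Ec Ed h1 h2 h3; rewrite /Defs.qexch /full_chain Ec Ed.
split; first by rewrite /= !size_cat.
exists (size p).+1; split; first split=> //.
- by rewrite /= size_cat /=; lia.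
- by move=> j nj; rewrite !nth_cons_cat; case: leqP=> // _; rewrite (negbTE nj).
- by rewrite /= !nth_cons_cat_last !nth_cat_mid !nth_cat_next.
Qed.

Lemma qexchP (c d : chain) : qexch c d -> exists p u u' v q,
  [/\ val c = p ++ u :: v :: q, val d = p ++ u' :: v :: q,
      lam (last z p) u' = lam u v & lam u' v = lam (last z p) u].
Proof.
case: c d=> s ps [t pt]; rewrite /Defs.qexch /full_chain /=.
case=> [[Es] [[|k] [[_ ii Heq] [h1 h2 h3]]]] //=; rewrite /= ltnS in ii h1 h2 h3.
have Heq' j : j != k -> nth z s j = nth z t j by move=> nj; apply: (Heq j.+1).
case: (nth_agree_take_drop Es Heq')=> Etake Edrop.
have ks : k < size s by apply: ltnW.
have kt : k < size t by rewrite -Es.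
have [p [u [u' [v [q [Es_ Et_ Ep]]]]]] : exists p u u' v q,
    [/\ s = p ++ u :: v :: q, t = p ++ u' :: v :: q & size p = k].
  exists (take k s), (nth z s k), (nth z t k), (nth z s k.+1), (drop k.+2 s); split.
  - by rewrite -{1}(cat_take_drop k s) (drop_nth z ks) (drop_nth z ii).
  - by rewrite -{1}(cat_take_drop k t) (drop_nth z kt) Etake Edrop (drop_nth z ii).
  - by rewrite size_takel // ltnW.
subst s t k; move: h2 h3; rewrite !nth_cons_cat_last !nth_cat_mid !nth_cat_next => h2 h3.
by exists p, u, u', v, q.
Qed.

Lemma qexch_perm (c d : chain) : qexch c d ->
  last z (val c) = last z (val d) /\ perm_eq (chain_labels (val c)) (chain_labels (val d)).
Proof.
case/qexchP=> p [u [u' [v [q [-> -> h2 h3]]]]].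
rewrite !last_cat /=; split=> //.
rewrite !chain_labels_cat perm_cat2l h2 h3.
by rewrite -[_ :: _ :: _]/([:: _] ++ [:: _] ++ _) perm_catCA.
Qed.

Lemma qsim_perm (c d : chain) : qsim c d -> perm_eq (chain_labels (val c)) (chain_labels (val d)).
Proof.
case=> _; elim=> [x y /qexch_perm [_ //]|x|x y _ h|x y w _ h1 _ h2].
- exact: perm_refl.
- by rewrite perm_sym.
- exact: perm_trans h1 h2.
Qed.

Lemma qsim_refl (c : chain) : qsim c c.
Proof. by split=> //; apply: rst_refl. Qed.

Lemma qsim_sym (c d : chain) : qsim c d -> qsim d c.
Proof. by case=> E H; split; [rewrite E | apply: rst_sym]. Qed.

Lemma qsim_trans (c d w : chain) : qsim c d -> qsim d w -> qsim c w.
Proof. by case=> E1 H1 [E2 H2]; split; [rewrite E1 E2 | apply: rst_trans H1 H2]. Qed.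

Definition rank2_switching := forall x y w, cov x y -> cov y w -> lam x y < lam y w ->
  exists y', [/\ cov x y', cov y' w, lam x y' = lam y w & lam y' w = lam x y].

Hypothesis switching : rank2_switching.

Lemma qsim_sort_step (c : chain) : ~~ sorted geq (chain_labels (val c)) ->
  exists2 d : chain, qsim c d &
    ascending_pairs (chain_labels (val c)) = (ascending_pairs (chain_labels (val d))).+1.
Proof.
case/(find_ascent (f := lam))=> p [u [v [q [Ec lt]]]].
have := valP c; rewrite Ec cat_path /= => /and4P [pp c1 c2 pq].
case: (switching c1 c2 lt)=> u' [d1 d2 l1 l2].
have pd : path cov z (p ++ u' :: v :: q) by rewrite cat_path /= pp d1 d2 pq.
pose d : chain := exist _ (p ++ u' :: v :: q) pd.
have hq : qexch c d by apply: (qexch_swap (u := u) (v := v) Ec).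
exists d.
- by split; [rewrite Ec /= !last_cat | apply: rst_step].
- by rewrite /= !chain_labels_cat l1 l2; apply: ascending_pairs_swap.
Qed.

Lemma qsim_sorted (c : chain) : exists2 d : chain, qsim c d & sorted geq (chain_labels (val d)).
Proof.
have [k] := ubnP (ascending_pairs (chain_labels (val c))); elim: k c => // k IH c hk.
case: (boolP (sorted geq (chain_labels (val c)))) => [so|/qsim_sort_step [d qcd hinv]].
  by exists c => //; apply: qsim_refl.
have [|d' qd' so] := IH d; first by rewrite -ltnS -hinv.
by exists d' => //; apply: qsim_trans qcd qd'.
Qed.

End QuadraticExchanges.

Section GradedChains.
Variables (T : eqType) (cov : rel T) (rk : T -> nat).
Hypothesis rk_cov : forall x y, cov x y -> rk x = (rk y).+1.

Lemma rk_nth_path x s i : path cov x s -> i <= size s -> rk (nth x (x :: s) i) + i = rk x.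
Proof.
elim: s x i => [|y s IH] x [|i] //=; rewrite ?addn0 // => /andP [cxy ps].
rewrite ltnS => hi; rewrite (set_nth_default y) ?ltnS // addnS -addSn (rk_cov cxy).
by rewrite -(IH y i ps hi).
Qed.

Lemma path_subset_prefix z s t : path cov z s -> path cov z t -> {subset z :: s <= z :: t} ->
  exists w, t = s ++ w.
Proof.
move=> ps pt sub.
have same_pos i : i <= size s -> i <= size t /\ nth z (z :: t) i = nth z (z :: s) i.
  move=> hi; have /(nthP z) [j hj Ej] : nth z (z :: s) i \in z :: t.
    by apply: sub; apply: mem_nth; rewrite ltnS.
  have := rk_nth_path ps hi; have := rk_nth_path pt (hj : j <= size t).
  by rewrite Ej => <- /addnI Eij; subst j.
exists (drop (size s) t); rewrite -{1}(cat_take_drop (size s) t); congr (_ ++ _).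
have [st _] := same_pos _ (leqnn _).
apply: (@eq_from_nth _ z); first by rewrite size_takel.
move=> i; rewrite size_takel // => hi; rewrite nth_take //.
by have [_ /= ->] := same_pos i.+1 hi.
Qed.

End GradedChains.

Section Partitions.
Variable T : finType.
Implicit Types (X Y U : {set T}).

Lemma partitionTP P : partition P [set: T] <->
  [/\ set0 \notin P, (forall x, exists2 X, X \in P & x \in X) &
      (forall X Y x, X \in P -> Y \in P -> x \in X -> x \in Y -> X = Y)].
Proof.
split.
- case/and3P=> /eqP cov /trivIsetP triv s0; split=> //.
  + move=> x; have : x \in cover P by rewrite cov inE.
    by case/bigcupP=> X HX Hx; exists X.
  + move=> X Y x HX HY xX xY; apply/eqP; apply/negPn/negP=> neq.
    have := triv X Y HX HY neq; rewrite -setI_eq0 => /eqP/setP/(_ x).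
    by rewrite inE xX xY inE.
- case=> s0 cov triv; apply/and3P; split=> //.
  + apply/eqP/setP=> x; rewrite inE; case: (cov x)=> X HX Hx.
    by apply/bigcupP; exists X.
  + apply/trivIsetP=> X Y HX HY neq; rewrite -setI_eq0; apply/eqP/setP=> x.
    rewrite !inE; apply/negbTE/negP=> /andP [xX xY].
    by move: neq; rewrite (triv X Y x HX HY xX xY) eqxx.
Qed.

Variable P : {set {set T}}.
Hypothesis partP : partition P [set: T].

Lemma block_witness X : X \in P -> exists x, x \in X.
Proof.
case/partitionTP: partP=> s0 _ _ HX; case: (set_0Vmem X)=> [E|[x]]; last by exists x.
by move: s0; rewrite -E HX.
Qed.

Lemma block_eq X Y x : X \in P -> Y \in P -> x \in X -> x \in Y -> X = Y.
Proof. by case/partitionTP: partP=> _ _; apply. Qed.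

Lemma block_cover x : exists2 X, X \in P & x \in X.
Proof. by case/partitionTP: partP. Qed.

Lemma blocks_disjoint X Y : X \in P -> Y \in P -> X != Y ->
  forall x, x \in X -> x \in Y -> False.
Proof. by move=> HX HY nXY x xX xY; rewrite (block_eq HX HY xX xY) eqxx in nXY. Qed.

Lemma superset_blocks_notin X Y U : X \in P -> Y \in P -> X != Y ->
  X \subset U -> Y \subset U -> U \notin P.
Proof.
move=> HX HY nXY /subsetP sX /subsetP sY; apply/negP=> HU.
case: (block_witness HX)=> x xX; case: (block_witness HY)=> y yY.
have E1 := block_eq HX HU xX (sX x xX); have E2 := block_eq HY HU yY (sY y yY).
by rewrite E1 E2 eqxx in nXY.
Qed.

Lemma setU_blocks_notin X Y : X \in P -> Y \in P -> X != Y -> X :|: Y \notin P.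
Proof. by move=> HX HY nXY; apply: superset_blocks_notin nXY _ _; rewrite ?subsetUl ?subsetUr. Qed.

End Partitions.

Section NoncrossingPartitions.
Variable n : nat.
Local Notation T := ('I_n).
Local Notation PT := {set {set T}}.
Implicit Types (P Q : PT) (B C X Y U V W : {set T}).

Lemma in_merge P B C X :
  (X \in merge P B C) = [&& X \in P, X != B & X != C] || (X == B :|: C).
Proof. by rewrite !inE; case: (X \in P); case: (X == B); case: (X == C); rewrite ?orbF. Qed.

Lemma mergeC P B C : merge P B C = merge P C B.
Proof. by apply/setP=> X; rewrite !in_merge setUC (andbC (X != B)). Qed.

Definition unmerge P D B C := (P :\ D) :|: [set B; C].

Lemma in_unmerge P D B C W :
  (W \in unmerge P D B C) = [&& W \in P & W != D] || (W == B) || (W == C).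
Proof. by rewrite !inE andbC orbA. Qed.

Section InPartition.
Variable P : PT.
Hypothesis partP : partition P [set: T].

Lemma partition_merge B C : B \in P -> C \in P -> B != C ->
  partition (merge P B C) [set: T].
Proof.
move=> HB HC nBC; case/partitionTP: (partP)=> s0 cov un; apply/partitionTP; split.
- rewrite in_merge negb_or; apply/andP; split.
  + by apply/negP=> /and3P [H _ _]; rewrite H in s0.
  + case: (block_witness partP HB)=> b Hb; apply/negP=> /eqP/setP/(_ b).
    by rewrite !inE Hb.
- move=> x; case: (cov x)=> X HX xX.
  case: (boolP ((X != B) && (X != C)))=> [/andP [h1 h2]|].
  + by exists X=> //; rewrite in_merge HX h1 h2.
  + rewrite negb_and !negbK=> h; exists (B :|: C); first by rewrite in_merge eqxx orbT.
    by case/orP: h=> /eqP E; rewrite inE -E xX ?orbT.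
- move=> X Y x; rewrite !in_merge.
  have old_new Z : Z \in P -> Z != B -> Z != C -> x \in Z -> x \in B :|: C -> False.
    move=> HZ h1 h2 xZ; rewrite inE=> /orP [xB|xC].
    + by move: h1; rewrite (un _ _ _ HZ HB xZ xB) eqxx.
    + by move: h2; rewrite (un _ _ _ HZ HC xZ xC) eqxx.
  case/orP=> [/and3P [HX h1 h2]|/eqP ->]; case/orP=> [/and3P [HY h3 h4]|/eqP ->] //.
  + exact: un.
  + by move=> xX xU; case: (old_new X HX h1 h2 xX xU).
  + by move=> xU xY; case: (old_new Y HY h3 h4 xY xU).
Qed.

Lemma card_merge B C : B \in P -> C \in P -> B != C -> #|merge P B C| + 1 = #|P|.
Proof.
move=> HB HC nBC; rewrite /merge setUC cardsU1.
have -> : B :|: C \notin (P :\ B) :\ C.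
  by rewrite !inE (negbTE (setU_blocks_notin partP HB HC nBC)) !andbF.
rewrite (cardsD1 B P) HB (cardsD1 C (P :\ B)) !inE HC eq_sym nBC /=.
by rewrite add1n addn1 add1n.
Qed.

Lemma merge_inj B C B' C' : B \in P -> C \in P -> B != C ->
  B' \in P -> C' \in P -> B' != C' -> merge P B C = merge P B' C' ->
  (B = B' /\ C = C') \/ (B = C' /\ C = B').
Proof.
move=> HB HC nBC HB' HC' nBC' E.
have : B :|: C \in merge P B' C' by rewrite -E in_merge eqxx orbT.
rewrite in_merge (negbTE (setU_blocks_notin partP HB HC nBC)) /= => /eqP EU.
case: (block_witness partP HB)=> b Hb; case: (block_witness partP HC)=> c Hc.
have : b \in B' :|: C' by rewrite -EU inE Hb.
have : c \in B' :|: C' by rewrite -EU inE Hc orbT.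
have eqP := block_eq partP.
rewrite !inE => /orP [cB'|cC'] /orP [bB'|bC'].
- by rewrite (eqP _ _ _ HB HB' Hb bB') (eqP _ _ _ HC HB' Hc cB') eqxx in nBC.
- by right; split; [apply: (eqP _ _ b) | apply: (eqP _ _ c)].
- by left; split; [apply: (eqP _ _ b) | apply: (eqP _ _ c)].
- by rewrite (eqP _ _ _ HB HC' Hb bC') (eqP _ _ _ HC HC' Hc cC') eqxx in nBC.
Qed.

Lemma in_merge_merge3 X Y Z W : X \in P -> Y \in P -> Z \in P ->
  X != Y -> X != Z -> Y != Z ->
  (W \in merge (merge P X Y) (X :|: Y) Z) =
  [&& W \in P, W != X, W != Y & W != Z] || (W == X :|: Y :|: Z).
Proof.
move=> HX HY HZ nXY nXZ nYZ.
have nU := setU_blocks_notin partP HX HY nXY.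
have nU3 : X :|: Y :|: Z \notin P.
  apply: (superset_blocks_notin partP HX HY nXY); rewrite -setUA ?subsetUl //.
  by rewrite subsetU ?subsetUl ?orbT.
rewrite !in_merge; case HW: (W \in P) => /=; last by case: (W == X :|: Y).
by rewrite (negbTE (memPn nU _ HW)) (negbTE (memPn nU3 _ HW)) /= !orbF andbA.
Qed.

Lemma merge3C X Y Z : X \in P -> Y \in P -> Z \in P -> X != Y -> X != Z -> Y != Z ->
  merge (merge P X Y) (X :|: Y) Z = merge (merge P X Z) (X :|: Z) Y.
Proof.
move=> HX HY HZ nXY nXZ nYZ; apply/setP=> W.
rewrite !in_merge_merge3 // 1?eq_sym // -!setUA (setUC Y).
by case: (W \in P); case: (W == X); case: (W == Y); case: (W == Z).
Qed.

Lemma in_merge_merge2 X Y U V W : X \in P -> Y \in P -> U \in P -> V \in P ->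
  X != Y -> U != V -> X != U -> X != V -> Y != U -> Y != V ->
  (W \in merge (merge P X Y) U V) =
  [|| [&& W \in P, W != X, W != Y, W != U & W != V], W == X :|: Y | W == U :|: V].
Proof.
move=> HX HY HU HV nXY nUV nXU nXV nYU nYV.
have nU1 := setU_blocks_notin partP HX HY nXY.
have nU2 := setU_blocks_notin partP HU HV nUV.
rewrite !in_merge; case HW: (W \in P) => /=.
  by rewrite (negbTE (memPn nU1 _ HW)) (negbTE (memPn nU2 _ HW)) /= !orbF -!andbA.
case: (eqVneq W (X :|: Y))=> [->|] //=.
by rewrite (memPnC nU1 _ HU) (memPnC nU1 _ HV).
Qed.

Lemma unmerge_merge B C : B \in P -> C \in P -> B != C ->
  unmerge (merge P B C) (B :|: C) B C = P.
Proof.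
move=> HB HC nBC; have nU := setU_blocks_notin partP HB HC nBC.
apply/setP=> W; rewrite in_unmerge in_merge.
case HW: (W \in P) => /=.
- case: (eqVneq W B)=> [->|h1]; first by rewrite orbT.
  case: (eqVneq W C)=> [->|h2]; first by rewrite orbT.
  by rewrite (memPn nU _ HW).
- case: (eqVneq W B)=> [E|_]; first by rewrite E HB in HW.
  case: (eqVneq W C)=> [E|_]; first by rewrite E HC in HW.
  by case: (W == B :|: C).
Qed.

Section Unmerge.
Variables (D B C : {set T}) (b c : T).
Hypotheses (HD : D \in P) (EU : B :|: C = D) (bB : b \in B) (cC : c \in C).
Hypothesis disBC : forall x, x \in B -> x \in C -> False.

Lemma unmerge_notin : B \notin P /\ C \notin P.
Proof.
have sB : b \in D by rewrite -EU inE bB.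
have sC : c \in D by rewrite -EU inE cC orbT.
split; apply/negP=> H.
- by apply: (@disBC c _ cC); rewrite (block_eq partP H HD bB sB) -EU inE cC orbT.
- by apply: (@disBC b bB); rewrite (block_eq partP H HD cC sC) -EU inE bB.
Qed.

Lemma partition_unmerge : partition (unmerge P D B C) [set: T].
Proof.
case/partitionTP: partP => s0 cov un; apply/partitionTP; split.
- rewrite in_unmerge !negb_or -andbA; apply/and3P; split.
  + by apply/negP=> /andP [h _]; rewrite h in s0.
  + by apply/negP=> /eqP E; move: bB; rewrite -E inE.
  + by apply/negP=> /eqP E; move: cC; rewrite -E inE.
- move=> x; case: (cov x)=> X HX xX.
  case: (eqVneq X D)=> [EX|nX]; last by exists X; rewrite // in_unmerge HX nX.
  move: xX; rewrite EX -EU => /setUP [xB|xC]; [exists B | exists C] => //;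
    by rewrite in_unmerge eqxx ?orbT.
- have old_new G Y x : (G \in P) && (G != D) -> Y \subset D -> x \in G -> x \in Y -> False.
    by case/andP=> HG nG /subsetP sY xG /sY xD; apply: (blocks_disjoint partP HG HD nG xG xD).
  have sB : B \subset D by rewrite -EU subsetUl.
  have sC : C \subset D by rewrite -EU subsetUr.
  move=> X Y x; rewrite !in_unmerge.
  case/orP=> [/orP [hX|/eqP ->]|/eqP ->]; case/orP=> [/orP [hY|/eqP ->]|/eqP ->] //.
  + by case/andP: hX=> HX _; case/andP: hY=> HY _; apply: un.
  + by move=> xX xB; case: (old_new X B x hX sB xX xB).
  + by move=> xX xC; case: (old_new X C x hX sC xX xC).
  + by move=> xB xY; case: (old_new Y B x hY sB xY xB).
  + by move=> xB xC; case: (disBC xB xC).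
  + by move=> xC xY; case: (old_new Y C x hY sC xY xC).
  + by move=> xC xB; case: (disBC xB xC).
Qed.

Lemma merge_unmerge : merge (unmerge P D B C) B C = P.
Proof.
case: unmerge_notin => BnP CnP.
apply/setP=> W; rewrite in_merge !in_unmerge EU.
case: (eqVneq W D)=> [->|nW]; first by rewrite HD orbT.
case HW: (W \in P)=> /=; last by case: (W == B); case: (W == C).
by rewrite (memPn BnP _ HW) (memPn CnP _ HW).
Qed.

End Unmerge.

End InPartition.

Lemma crossingP B C : reflect
  (exists a b c d : T, [/\ a < b, b < c, c < d & [/\ a \in B, c \in B, b \in C & d \in C]])
  (crossing B C).
Proof.
apply: (iffP idP).
- case/existsP=> a /existsP [b /existsP [c /existsP [d]]].
  by case/and5P=> h1 h2 h3 h4 /and3P [h5 h6 h7]; exists a, b, c, d.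
- case=> a [b [c [d [h1 h2 h3 [h4 h5 h6 h7]]]]].
  by apply/existsP; exists a; apply/existsP; exists b; apply/existsP; exists c;
     apply/existsP; exists d; rewrite h1 h2 h3 h4 h5 h6 h7.
Qed.

Lemma crossingS B C B' C' : B \subset B' -> C \subset C' -> crossing B C -> crossing B' C'.
Proof.
move=> /subsetP sB /subsetP sC /crossingP [a [b [c [d [h1 h2 h3 [h4 h5 h6 h7]]]]]].
by apply/crossingP; exists a, b, c, d; split=> //; split; auto.
Qed.

Lemma noncrossing_set1 B c : ~~ crossing B [set c] /\ ~~ crossing [set c] B.
Proof.
split; apply/negP=> /crossingP [x1 [x2 [x3 [x4 [h1 h2 h3 [h4 h5 h6 h7]]]]]].
- move: h6 h7; rewrite !inE=> /eqP E1 /eqP E2.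
  by move: (ltn_trans h2 h3); rewrite E1 E2 ltnn.
- move: h4 h5; rewrite !inE=> /eqP E1 /eqP E2.
  by move: (ltn_trans h1 h2); rewrite E1 E2 ltnn.
Qed.

Definition nested_at B C (b : T) :=
  b \in B /\ forall c, c \in C -> b < c /\ (forall b', b' \in B -> b < b' -> c < b').

Lemma nested_noncrossing B C b : nested_at B C b -> ~~ crossing B C /\ ~~ crossing C B.
Proof.
case=> Hb g; split; apply/negP=> /crossingP [x1 [x2 [x3 [x4 [h1 h2 h3 [h4 h5 h6 h7]]]]]].
- case: (g x2 h6)=> l1 _; case: (g x4 h7)=> _ l4.
  by move: (ltn_trans h3 (l4 x3 h5 (ltn_trans l1 h2))); rewrite ltnn.
- case: (g x1 h4)=> l1 _; case: (g x3 h5)=> _ l2.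
  by move: (ltn_trans h2 (l2 x2 h6 (ltn_trans l1 h1))); rewrite ltnn.
Qed.

Lemma smin_min B x : x \in B ->
  exists2 m, m \in B & smin B = m /\ forall y, y \in B -> m <= y.
Proof.
move=> xB; case: (arg_minnP (fun i : T => val i) xB)=> m mB mmin.
exists m=> //; split=> //; apply/eqP; rewrite eqn_leq; apply/andP; split.
- have le_m (r : seq T) : m \in r -> \big[minn/n]_(i <- r | i \in B) val i <= m.
    elim: r => // y r IH; rewrite in_cons big_cons => /orP [/eqP <-|/IH].
      by rewrite ifT // geq_minl.
    by case: ifP => // _; apply: leq_trans; apply: geq_minr.
  by apply: le_m; rewrite mem_index_enum.
- apply: (big_ind (fun v => m <= v)); first exact: ltnW.
    by move=> u v h1 h2; rewrite leq_min h1 h2.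
  by move=> i iB; apply: mmin.
Qed.

Lemma smaxlt_nested B C b c0 : nested_at B C b -> c0 \in C -> smaxlt B (smin C) = b.
Proof.
move=> [Hb g] c0C; case: (smin_min c0C)=> m mC [-> mmin].
apply/eqP; rewrite eqn_leq; apply/andP; split.
- apply/bigmax_leqP=> i /andP [iB im]; rewrite leqNgt; apply/negP=> bi.
  by case: (g m mC)=> _ /(_ i iB bi); rewrite ltnNge ltnW.
- by apply: (@leq_bigmax_cond _ _ _ b); rewrite Hb; case: (g m mC).
Qed.

Lemma smin_lt_nested B C b c0 : nested_at B C b -> c0 \in C -> smin B < smin C.
Proof.
move=> [Hb g] c0C; case: (smin_min c0C)=> m mC [-> mmin].
case: (smin_min Hb)=> m' m'B [-> m'min].
by apply: leq_ltn_trans (m'min _ Hb) _; case: (g m mC).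
Qed.

(* The nesting point is the largest element of B below min C. *)
Lemma noncrossing_nested B C b0 c0 : b0 \in B -> c0 \in C ->
  (forall x, x \in B -> x \in C -> False) -> ~~ crossing B C -> smin B < smin C ->
  exists b, nested_at B C b.
Proof.
move=> b0B c0C dis ncr.
case: (smin_min b0B)=> mB mBB [-> _]; case: (smin_min c0C)=> mC mCC [-> mCmin] lt.
have P0 : (mB \in B) && (mB < mC) by rewrite mBB lt.
case: (@arg_maxnP _ mB (fun i : T => (i \in B) && (i < mC)) val P0)=> a /andP [aB amC] amax.
exists a; split=> // c cC; split; first exact: leq_trans amC (mCmin c cC).
move=> b' b'B ab'.
have mCb' : mC < b'.
  rewrite ltn_neqAle; apply/andP; split.
  + by apply/negP=> /eqP/val_inj E; apply: (dis b')=> //; rewrite -E.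
  + rewrite leqNgt; apply/negP=> h.
    by move: (amax b' (introT andP (conj b'B h))) => /(leq_trans ab'); rewrite ltnn.
rewrite ltnNge; apply/negP=> b'c.
have b'c' : b' < c.
  by rewrite ltn_neqAle b'c andbT; apply/negP=> /eqP/val_inj E; apply: (dis b')=> //; rewrite E.
by move/negP: ncr; apply; apply/crossingP; exists a, mC, b', c.
Qed.

Lemma isNCP P : isNC P <-> partition P [set: T] /\
  (forall B C, B \in P -> C \in P -> B != C -> ~~ crossing B C).
Proof.
split.
- case/andP=> pP /forall_inP H; split=> // B C HB HC nBC.
  by move/forall_inP: (H B HB)=> /(_ C HC) /implyP; apply.
- case=> pP H; apply/andP; split=> //; apply/forall_inP=> B HB.
  by apply/forall_inP=> C HC; apply/implyP; apply: H.
Qed.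

Lemma isNC_partition P : isNC P -> partition P [set: T].
Proof. by case/isNCP. Qed.

Lemma noncrossing_subblocks Q X Y X' Y' : isNC Q -> X' \in Q -> Y' \in Q -> X' != Y' ->
  X \subset X' -> Y \subset Y' -> ~~ crossing X Y /\ ~~ crossing Y X.
Proof.
case/isNCP=> _ ncQ HX HY nXY sX sY; split; apply/negP=> /crossingS cr.
- by move/negP: (ncQ _ _ HX HY nXY); apply; apply: cr.
- by rewrite eq_sym in nXY; move/negP: (ncQ _ _ HY HX nXY); apply; apply: cr.
Qed.

Lemma isNC_merge P B C : isNC P -> B \in P -> C \in P -> B != C ->
  (forall G, G \in P -> G != B -> G != C ->
     ~~ crossing (B :|: C) G /\ ~~ crossing G (B :|: C)) ->
  isNC (merge P B C).
Proof.
move=> /isNCP [pP ncP] HB HC nBC H; apply/isNCP; split; first exact: partition_merge.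
move=> X Y; rewrite !in_merge.
case/orP=> [/and3P [HX h1 h2]|/eqP ->]; case/orP=> [/and3P [HY h3 h4]|/eqP ->] nXY.
- exact: ncP.
- by case: (H X HX h1 h2).
- by case: (H Y HY h3 h4).
- by rewrite eqxx in nXY.
Qed.

Lemma isNC_unmerge P D B C b c : isNC P -> D \in P -> B :|: C = D -> b \in B -> c \in C ->
  (forall x, x \in B -> x \in C -> False) -> ~~ crossing B C -> ~~ crossing C B ->
  isNC (unmerge P D B C).
Proof.
move=> nP HD EU bB cC dis nBC nCB; apply/isNCP; split.
  by apply: (partition_unmerge (isNC_partition nP) HD EU bB cC).
have old_new G (S : {set T}) : (G \in P) && (G != D) -> S \subset D ->
    ~~ crossing G S /\ ~~ crossing S G.
  by case/andP=> HG nG; apply: noncrossing_subblocks nP HG HD nG (subxx G).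
have sB : B \subset D by rewrite -EU subsetUl.
have sC : C \subset D by rewrite -EU subsetUr.
case/isNCP: nP => _ ncP X Y; rewrite !in_unmerge.
case/orP=> [/orP [hX|/eqP ->]|/eqP ->]; case/orP=> [/orP [hY|/eqP ->]|/eqP ->] nXY //;
  rewrite ?eqxx // in nXY.
- by case/andP: hX hY => HX _ /andP [HY _]; apply: ncP.
- by case: (old_new X B hX sB).
- by case: (old_new X C hX sC).
- by case: (old_new Y B hY sB).
- by case: (old_new Y C hY sC).
Qed.

Definition nested_merge P Q b := exists B C,
  [/\ B \in P, C \in P, B != C, nested_at B C b & Q = merge P B C].

Lemma lamNC_merge P B C b : partition P [set: T] -> B \in P -> C \in P -> B != C ->
  nested_at B C b -> lamNC P (merge P B C) = b.
Proof.
move=> pP HB HC nBC g; case: (block_witness pP HC)=> c0 c0C.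
rewrite /lamNC; case: pickP=> [[B' C'] /= | H].
- case/and5P=> HB' HC' nBC' /eqP E lt.
  case: (merge_inj pP HB HC nBC HB' HC' nBC' E)=> [[<- <-]|[E1 E2]].
  + exact: smaxlt_nested g c0C.
  + by move: (smin_lt_nested g c0C); rewrite E1 E2 => /(ltn_trans lt); rewrite ltnn.
- by move: (H (B, C)); rewrite /= HB HC nBC eqxx (smin_lt_nested g c0C).
Qed.

Lemma coverNCP P Q : coverNC P Q ->
  [/\ isNC P, isNC Q & exists2 b : T, nested_merge P Q b & lamNC P Q = b].
Proof.
case/and3P=> nP nQ /exists_inP [B HB /exists_inP [C HC /andP [nBC /eqP EQ]]].
split=> //; case/isNCP: (nP)=> pP ncP.
case: (block_witness pP HB)=> b0 b0B; case: (block_witness pP HC)=> c0 c0C.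
have dis := blocks_disjoint pP.
suff [b [B' [C' [HB' HC' nBC' g EQ']]]] : exists b, nested_merge P Q b.
  by exists b; [exists B', C' | rewrite EQ' (lamNC_merge pP HB' HC' nBC' g)].
case: (ltngtP (smin B) (smin C))=> h.
- case: (noncrossing_nested b0B c0C (dis _ _ HB HC nBC) (ncP _ _ HB HC nBC) h)=> b g.
  by exists b, B, C.
- rewrite eq_sym in nBC.
  case: (noncrossing_nested c0C b0B (dis _ _ HC HB nBC) (ncP _ _ HC HB nBC) h)=> b g.
  by exists b, C, B; rewrite mergeC.
- case: (smin_min b0B) (smin_min c0C)=> mB mBB [EB _] [mC mCC [EC _]].
  rewrite EB EC in h; have E : mB = mC by apply: val_inj.
  by case: (dis _ _ HB HC nBC mB mBB); rewrite E.
Qed.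

Lemma coverNC_nested P Q b : isNC P -> isNC Q -> nested_merge P Q b ->
  coverNC P Q /\ lamNC P Q = b.
Proof.
move=> nP nQ [B [C [HB HC nBC g EQ]]]; subst Q.
split; last exact: lamNC_merge (isNC_partition nP) HB HC nBC g.
apply/and3P; split=> //; apply/existsP; exists B; rewrite HB /=.
by apply/existsP; exists C; rewrite HC nBC eqxx.
Qed.

Lemma card_coverNC P Q : coverNC P Q -> #|P| = #|Q|.+1.
Proof.
case/coverNCP=> nP _ [b [B [C [HB HC nBC _ ->]]] _].
by rewrite -(card_merge (isNC_partition nP) HB HC nBC) addn1.
Qed.

Lemma zNC_partition : partition (zNC n) [set: T].
Proof.
apply/partitionTP; split.
- by apply/imsetP=> [[x _ /setP/(_ x)]]; rewrite !inE eqxx.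
- by move=> x; exists [set x]; [apply: imset_f | rewrite inE].
- by move=> X Y x /imsetP [a _ ->] /imsetP [b _ ->]; rewrite !inE => /eqP -> /eqP ->.
Qed.

Lemma isNC_zNC : isNC (zNC n).
Proof.
apply/isNCP; split; first exact: zNC_partition.
by move=> B C /imsetP [a _ ->] /imsetP [b _ ->] _; case: (noncrossing_set1 [set a] b).
Qed.

End NoncrossingPartitions.

Section Switching.
Variable n : nat.
Local Notation T := ('I_n).
Local Notation PT := {set {set T}}.

Variables (P : PT) (B1 C1 : {set T}) (a : T).
Hypotheses (nP : isNC P) (HB1 : B1 \in P) (HC1 : C1 \in P) (nBC1 : B1 != C1).
Hypothesis g1 : nested_at B1 C1 a.
Local Notation D := (B1 :|: C1).
Local Notation P1 := (merge P B1 C1).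

Lemma switch_disjoint B2 C2 b :
  B2 \in P -> C2 \in P -> B2 != C2 -> nested_at B2 C2 b ->
  [&& B2 != B1, B2 != C1, C2 != B1 & C2 != C1] -> isNC (merge P1 B2 C2) ->
  exists2 P', isNC P' & nested_merge P P' b /\ nested_merge P' (merge P1 B2 C2) a.
Proof.
move=> HB2 HC2 nBC2 g2 /and4P [b21 b22 c21 c22] nP2.
have pP := isNC_partition nP.
have nD : D \notin P by apply: setU_blocks_notin.
have UP2 : B2 :|: C2 \in merge P1 B2 C2 by rewrite in_merge eqxx orbT.
have DP2 : D \in merge P1 B2 C2.
  by rewrite !in_merge eqxx orbT (memPnC nD _ HB2) (memPnC nD _ HC2).
have nDU : D != B2 :|: C2.
  have pP1 := partition_merge pP HB1 HC1 nBC1.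
  have HB2' : B2 \in P1 by rewrite in_merge HB2 b21 b22.
  have HC2' : C2 \in P1 by rewrite in_merge HC2 c21 c22.
  by apply: (memPn (setU_blocks_notin pP1 HB2' HC2' nBC2)); rewrite in_merge eqxx orbT.
have nP' : isNC (merge P B2 C2).
  apply: isNC_merge=> // G HG h1 h2.
  case: (boolP ((G == B1) || (G == C1)))=> [hG|].
  + have sG : G \subset D by case/orP: hG=> /eqP ->; rewrite ?subsetUl ?subsetUr.
    by case: (noncrossing_subblocks nP2 UP2 DP2 _ (subxx _) sG); rewrite // eq_sym.
  + rewrite negb_or => /andP [h3 h4].
    have GP2 : G \in merge P1 B2 C2 by rewrite !in_merge HG h1 h2 h3 h4.
    have nGU : G != B2 :|: C2 by rewrite (memPn (setU_blocks_notin pP HB2 HC2 nBC2) _ HG).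
    by case: (noncrossing_subblocks nP2 UP2 GP2 _ (subxx _) (subxx G)); rewrite // eq_sym.
exists (merge P B2 C2) => //; split; first by exists B2, C2.
exists B1, C1; split=> //.
- by rewrite in_merge HB1 eq_sym b21 eq_sym c21.
- by rewrite in_merge HC1 eq_sym b22 eq_sym c22.
apply/setP=> W; rewrite !in_merge_merge2 // 1?eq_sym // ![_ == W]eq_sym.
by case: (W \in P); case: (W == B1); case: (W == C1); case: (W == B2); case: (W == C2);
   case: (W == B1 :|: C1); case: (W == B2 :|: C2).
Qed.

Section IntoMergedBlock.
Variables (C2 : {set T}) (b : T).
Hypotheses (HC2 : C2 \in P) (c21 : C2 != B1) (c22 : C2 != C1) (ab : a < b).
Hypotheses (g2 : nested_at D C2 b) (nP2 : isNC (merge P1 D C2)).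

Lemma noncrossing_outside (S G : {set T}) : S \subset D :|: C2 -> G \in P ->
  G != B1 -> G != C1 -> G != C2 -> ~~ crossing S G /\ ~~ crossing G S.
Proof.
move=> sS HG h1 h2 h3; have pP := isNC_partition nP.
have nD : D \notin P by apply: setU_blocks_notin.
have GP1 : G \in P1 by rewrite in_merge HG h1 h2.
have GP2 : G \in merge P1 D C2 by rewrite in_merge GP1 h3 (memPn nD _ HG).
have UP2 : D :|: C2 \in merge P1 D C2 by rewrite in_merge eqxx orbT.
have nGU : G != D :|: C2.
  apply: (memPn (superset_blocks_notin pP HB1 HC2 _ _ _)) => //; first by rewrite eq_sym.
  - by rewrite -setUA subsetUl.
  - exact: subsetUr.
by case: (noncrossing_subblocks nP2 UP2 GP2 _ sS (subxx G)); rewrite // eq_sym.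
Qed.

Lemma switch_into_left : b \in B1 ->
  exists2 P', isNC P' & nested_merge P P' b /\ nested_merge P' (merge P1 D C2) a.
Proof.
move=> bB1; have pP := isNC_partition nP; case: g1 g2 => aB1 g1' [_ g2'].
have g' : nested_at B1 C2 b.
  split=> // e eC2; case: (g2' e eC2)=> h1 h2; split=> // b' b'B1 bb'.
  by apply: h2; rewrite ?inE ?b'B1.
have g'' : nested_at (B1 :|: C2) C1 a.
  split; first by rewrite inE aB1.
  move=> c cC1; case: (g1' c cC1)=> h1 h2; split=> // x /setUP [xB1|xC2] ax; first exact: h2.
  exact: ltn_trans (h2 _ bB1 ab) (proj1 (g2' x xC2)).
have nBC2 : B1 != C2 by rewrite eq_sym.
have nP' : isNC (merge P B1 C2).
  apply: isNC_merge=> // G HG h1 h2; case: (eqVneq G C1)=> [->|h3].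
  - by case: (nested_noncrossing g'').
  - by apply: noncrossing_outside=> //; apply: setSU; apply: subsetUl.
exists (merge P B1 C2)=> //; split; first by exists B1, C2.
exists (B1 :|: C2), C1; split=> //.
- by rewrite in_merge eqxx orbT.
- by rewrite in_merge HC1 eq_sym nBC1 eq_sym c22.
- by rewrite eq_sym (memPn (setU_blocks_notin pP HB1 HC2 nBC2) _ HC1).
- by rewrite merge3C // eq_sym.
Qed.

Lemma switch_into_right : b \in C1 ->
  exists2 P', isNC P' & nested_merge P P' b /\ nested_merge P' (merge P1 D C2) a.
Proof.
move=> bC1; have pP := isNC_partition nP; case: g1 g2 => aB1 g1' [_ g2'].
have g' : nested_at C1 C2 b.
  split=> // e eC2; case: (g2' e eC2)=> h1 h2; split=> // b' b'C1 bb'.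
  by apply: h2; rewrite ?inE ?b'C1 ?orbT.
have g'' : nested_at B1 (C1 :|: C2) a.
  split=> // x /setUP [xC1|xC2]; first exact: g1'.
  case: (g2' x xC2)=> bx h2; split; first exact: ltn_trans ab bx.
  by move=> b' b'B1 ab'; apply: h2; rewrite ?inE ?b'B1 //; case: (g1' b bC1)=> _; apply.
have nCC2 : C1 != C2 by rewrite eq_sym.
have nP' : isNC (merge P C1 C2).
  apply: isNC_merge=> // G HG h1 h2; case: (eqVneq G B1)=> [->|h3].
  - by case: (nested_noncrossing g'').
  - by apply: noncrossing_outside=> //; rewrite -setUA subsetUr.
exists (merge P C1 C2)=> //; split; first by exists C1, C2.
exists B1, (C1 :|: C2); split=> //.
- by rewrite in_merge HB1 nBC1 eq_sym c21.
- by rewrite in_merge eqxx orbT.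
- by rewrite (memPn (setU_blocks_notin pP HC1 HC2 nCC2) _ HB1).
- by rewrite [RHS]mergeC (mergeC P B1) (setUC B1) merge3C // eq_sym.
Qed.

End IntoMergedBlock.
End Switching.

(* Either the two merges involve four distinct blocks and commute, or the second one nests a
   block C2 into B1 :|: C1 at some b > a, with b in B1 or in C1; in each case C2 can be merged
   first. *)
Lemma switch n : rank2_switching (@coverNC n) (@lamNC n).
Proof.
move=> P P1 P2; case/coverNCP=> nP _ [a [B1 [C1 [HB1 HC1 n1 g1 ->]]] ->].
case/coverNCP=> _ nP2 [b [B2 [C2 [HB2 HC2 n2 g2 E2]]] ->] ab.
suff [P' nP' [m1 m2]] : exists2 P', isNC P' & nested_merge P P' b /\ nested_merge P' P2 a.
  case: (coverNC_nested nP nP' m1) (coverNC_nested nP' nP2 m2) => c1 l1 [c2 l2].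
  by exists P'.
subst P2; move: HB2 HC2 g2 n2 nP2; rewrite !in_merge.
case/orP=> [/and3P [HB2 b21 b22] | /eqP ->]; case/orP=> [/and3P [HC2 c21 c22] | /eqP ->] g2 n2 nP2.
- by apply: switch_disjoint; rewrite ?b21 ?b22 ?c21.
- by case: g1 g2 => aB1 _ [_ /(_ a)]; rewrite inE aB1 => /(_ isT) [/(ltn_trans ab)]; rewrite ltnn.
- by case: (g2) => /setUP [bB1|bC1] _; [apply: switch_into_left | apply: switch_into_right].
- by rewrite eqxx in n2.
Qed.

Section DyckPaths.
Variable n : nat.
Local Notation T := ('I_n).
Implicit Types (S B C D : {set T}) (e : {ffun T -> nat}).

Definition count_below S (t : nat) := \sum_(a in S | a < t) 1.
Definition sum_below e S (t : nat) := \sum_(a in S | a < t) e a.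

(* [isDyck], with the prefix condition taken below every threshold t in nat (see [isDyckP]). *)
Definition dyck S e :=
  \sum_(a in S) e a = #|S| - 1 /\
  forall t, count_below S t < #|S| -> count_below S t <= sum_below e S t.

Lemma card_split_below S t :
  #|S| = count_below S t + \sum_(a in S | ~~ (a < t)) 1.
Proof. by rewrite -sum1_card /count_below (bigID (fun a : T => a < t)). Qed.

Lemma sum_split_below e S t :
  \sum_(a in S) e a = sum_below e S t + \sum_(a in S | ~~ (a < t)) e a.
Proof. by rewrite /sum_below (bigID (fun a : T => a < t)). Qed.

Lemma count_below_le S t : count_below S t <= #|S|.
Proof. by rewrite (card_split_below S t) leq_addr. Qed.

Lemma count_below_lt S t x : x \in S -> ~~ (x < t) -> count_below S t < #|S|.
Proof.
move=> xS xt; rewrite (card_split_below S t) -addn1 leq_add2l.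
by rewrite (bigD1 x) //= ?xS.
Qed.

Lemma count_below_full S t : count_below S t = #|S| -> forall x, x \in S -> x < t.
Proof.
move=> E x xS; apply/negPn/negP=> h.
by move: (count_below_lt xS h); rewrite E ltnn.
Qed.

Lemma below_all S t : (forall x, x \in S -> x < t) -> count_below S t = #|S| /\
  forall e, sum_below e S t = \sum_(a in S) e a.
Proof.
move=> H; split.
- rewrite (card_split_below S t) big_pred0 ?addn0 // => x.
  by apply/andP=> [[xS]]; rewrite (H x xS).
- move=> e; rewrite (sum_split_below e S t) big_pred0 ?addn0 // => x.
  by apply/andP=> [[xS]]; rewrite (H x xS).
Qed.

Lemma below_none S t : (forall x, x \in S -> ~~ (x < t)) -> count_below S t = 0 /\
  forall e, sum_below e S t = 0.
Proof.
move=> H; split.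
- rewrite /count_below big_pred0 // => x; apply/andP=> [[xS]].
  by rewrite (negbTE (H x xS)).
- move=> e; rewrite /sum_below big_pred0 // => x; apply/andP=> [[xS]].
  by rewrite (negbTE (H x xS)).
Qed.

Lemma isDyckP S e : isDyck S e <-> dyck S e.
Proof.
have below_succ t (F : T -> nat) :
    \sum_(a in S | a < t.+1) F a = \sum_(a in S | a <= t) F a.
  by apply: eq_bigl => y; rewrite ltnS.
have Ecard t : #|[set a in S | a <= t]| = count_below S t.+1.
  by rewrite /count_below sum1dep_card; apply: eq_card => x; rewrite !inE ?ltnS.
split.
- case/andP=> /eqP tot /forall_inP pre; split=> // t h.
  case: (boolP [exists x in S, x < t]) => [/exists_inP [x0 x0S x0t]|]; last first.
    by rewrite negb_exists_in => /forall_inP /below_none [->].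
  have [m /andP [mS mt] mmax] :=
    @arg_maxnP _ x0 (fun y : T => (y \in S) && (y < t)) val (introT andP (conj x0S x0t)).
  have E (F : T -> nat) : \sum_(a in S | a < t) F a = \sum_(a in S | a < m.+1) F a.
    apply: eq_bigl=> y; case yS: (y \in S)=> //=; rewrite ltnS.
    by apply/idP/idP=> hy; [apply: (mmax y); rewrite yS hy | apply: leq_ltn_trans hy mt].
  have := pre m mS; rewrite Ecard -below_succ -/(sum_below e S m.+1).
  by rewrite /count_below /sum_below !E in h * => /implyP; apply.
- case=> tot pre; apply/andP; split; first exact/eqP.
  by apply/forall_inP=> b bS; rewrite Ecard -below_succ; apply/implyP; apply: pre.
Qed.

Lemma dyck_count_le_succ S e t : dyck S e -> count_below S t <= (sum_below e S t).+1.
Proof.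
case=> tot pre; case: (ltngtP (count_below S t) #|S|)=> h.
- by apply: leq_trans (pre t h) _.
- by move: (count_below_le S t); rewrite leqNgt h.
- have all := count_below_full h; case: (below_all all)=> _ ->; rewrite tot h.
  lia.
Qed.

Lemma dyck_eq S e e' : (forall x, x \in S -> e x = e' x) -> dyck S e -> dyck S e'.
Proof.
move=> E [tot pre]; split.
- by rewrite -tot; apply: eq_bigr=> x xS; rewrite E.
- move=> t h; rewrite /sum_below -(eq_bigr _ (fun x xS => E x (proj1 (andP xS)))).
  exact: pre.
Qed.

Definition incr_at e (b : T) : {ffun T -> nat} :=
  [ffun x => if x == b then (e x).+1 else e x].

Lemma sum_incr_at e b S (P : pred T) :
  \sum_(a in S | P a) incr_at e b a = \sum_(a in S | P a) e a + ((b \in S) && P b).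
Proof.
case: (boolP ((b \in S) && P b))=> h.
- rewrite (bigD1 b h) (bigD1 b h) /= /incr_at ffunE eqxx addn1 addSn; congr (_ + _).+1.
  by apply: eq_bigr=> i /andP [_ ni]; rewrite ffunE (negbTE ni).
- rewrite addn0; apply: eq_bigr=> i iSP; rewrite ffunE.
  case: eqP=> // E; by rewrite -E iSP in h.
Qed.

Lemma sum_below_nested B C b c t (F : T -> nat) : nested_at B C b -> c \in C ->
  b < t -> t <= c -> \sum_(a in B | a < t) F a = \sum_(a in B | a < b.+1) F a.
Proof.
case=> _ g cC bt tc; apply: eq_bigl => a; case aB: (a \in B) => //=.
rewrite ltnS; apply/idP/idP => ha; last exact: leq_ltn_trans ha bt.
rewrite leqNgt; apply/negP => ba.
by move: (leq_ltn_trans tc ((proj2 (g c cC)) a aB ba)); rewrite ltnNge ltnW.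
Qed.

Lemma dyck_merge B C b c0 e : dyck B e -> dyck C e -> nested_at B C b -> c0 \in C ->
  (forall x, x \in B -> x \in C -> False) -> dyck (B :|: C) (incr_at e b).
Proof.
move=> DB [totC preC] g c0C dis; case: (DB) (g) => totB preB [bB gC].
have cardU : #|B :|: C| = #|B| + #|C| by rewrite -!sum1_card big_setU_disjoint.
have B0 : 0 < #|B| by apply/card_gt0P; exists b.
have C0 : 0 < #|C| by apply/card_gt0P; exists c0.
have splitU t : count_below (B :|: C) t = count_below B t + count_below C t /\
    sum_below (incr_at e b) (B :|: C) t = sum_below e B t + sum_below e C t + (b < t).
  by rewrite /count_below /sum_below sum_incr_at !big_setU_disjoint_cond //= inE bB.
split.
  have := sum_incr_at e b (B :|: C) xpredT; rewrite !big_condT inE bB /= => ->.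
  by rewrite big_setU_disjoint //= totB totC cardU; lia.
move=> t; have [-> ->] := splitU t; rewrite cardU => h.
case: (leqP t b) => tb.
  have nC x : x \in C -> ~~ (x < t).
    by move=> xC; rewrite -leqNgt; apply: leq_trans tb (ltnW (proj1 (gC x xC))).
  have /preB : count_below B t < #|B| by apply: (count_below_lt bB); rewrite -leqNgt.
  by case: (below_none nC) => -> ->; rewrite /nat_of_bool; lia.
rewrite /nat_of_bool; case: (boolP [forall x in C, x < t]) => [/forall_inP allC|].
  case: (below_all allC) => E1 E2; rewrite E1 E2 totC; rewrite E1 ltn_add2r in h.
  by have := preB t h; lia.
rewrite negb_forall_in => /existsP [c /andP [cC]]; rewrite -leqNgt => ct.
have /preC : count_below C t < #|C| by apply: (count_below_lt cC); rewrite -leqNgt.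
have := dyck_count_le_succ b.+1 DB.
by rewrite /count_below /sum_below -!(sum_below_nested _ g cC tb ct); lia.
Qed.

Definition decr_at e (b : T) : {ffun T -> nat} :=
  [ffun x => if x == b then (e x).-1 else e x].

Lemma decr_atK e b : 0 < e b -> incr_at (decr_at e b) b = e.
Proof.
move=> h; apply/ffunP=> x; rewrite !ffunE; case: eqP=> // ->.
by rewrite prednK.
Qed.

Lemma sum_decr_at e b S (P : pred T) : 0 < e b ->
  \sum_(a in S | P a) decr_at e b a + ((b \in S) && P b) = \sum_(a in S | P a) e a.
Proof. by move=> h; rewrite -sum_incr_at decr_atK. Qed.

Lemma dyck_split D e a c : dyck D e -> a \in D -> 0 < e a ->
  (forall x, x \in D -> a < x -> e x = 0) -> c \in D -> a < c ->
  dyck (D :\ c) (decr_at e a) /\ dyck [set c] (decr_at e a).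
Proof.
move=> [tot pre] aD ea zero cD ac.
have ec : e c = 0 by apply: zero.
have nac : (c == a) = false by apply/negP=> /eqP E; rewrite E ltnn in ac.
have aD' : a \in D :\ c by rewrite !inE aD andbT; apply/negP=> /eqP E; rewrite E ltnn in ac.
have cardD : #|D| = #|D :\ c|.+1 by rewrite (cardsD1 c D) cD.
split; last first.
- split.
  + by rewrite big_set1 ffunE nac ec cards1.
  + by move=> t; rewrite cards1 ltnS leqn0 => /eqP ->.
split.
- have := sum_decr_at (D :\ c) (fun _ => true) ea; rewrite !big_condT aD' /=.
  have := big_setD1_cond addn xpredT e cD; rewrite !big_condT /= ec add0n.
  move=> <-; rewrite tot cardD subn1 /= => E; by rewrite -E addnK.
- move=> t h.
  have /= E1 := big_setD1_cond addn (fun x : T => x < t) (fun _ => 1) cD.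
  have /= E2 := big_setD1_cond addn (fun x : T => x < t) e cD.
  have E3 := sum_decr_at (D :\ c) (fun x : T => x < t) ea.
  rewrite -/(count_below D t) -/(count_below (D :\ c) t) in E1.
  rewrite -/(sum_below e D t) -/(sum_below e (D :\ c) t) in E2.
  rewrite -/(sum_below e (D :\ c) t) -/(sum_below (decr_at e a) (D :\ c) t) aD' /= in E3.
  rewrite ec in E2.
  case: (leqP t a)=> ta.
  + have ct : (c < t) = false by apply: negbTE; rewrite -leqNgt (leq_trans ta) // ltnW.
    have at' : (a < t) = false by rewrite ltnNge ta.
    rewrite ct in E1 E2; rewrite at' in E3.
    have hD : count_below D t < #|D| by apply: (count_below_lt aD); rewrite at'.
    have := pre t hD; lia.
  + rewrite ta in E3.
    have hs : sum_below e D t = #|D| - 1.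
      rewrite -tot (sum_split_below e D t) big1 ?addn0 // => x /andP [xD xt].
      by apply: zero=> //; apply: leq_trans ta _; rewrite leqNgt.
    move: E1 E2; case: (c < t)=> E1 E2; lia.
Qed.

Lemma dyck_last_up D e : dyck D e -> 1 < #|D| ->
  exists a c, [/\ a \in D, 0 < e a, (forall x, x \in D -> a < x -> e x = 0) &
                   [/\ c \in D, a < c & forall x, x \in D -> a < x -> c <= x]].
Proof.
move=> [totD preD] cardD2.
have [a0 /andP [a0D ea0]] : exists a0, (a0 \in D) && (0 < e a0).
  apply/existsP; apply: contraLR cardD2 => /existsPn H.
  have : \sum_(x in D) e x = 0.
    by apply: big1=> x xD; have := H x; rewrite xD /= lt0n negbK => /eqP.
  by rewrite totD; lia.
case: (@arg_maxnP _ a0 (fun y : T => (y \in D) && (0 < e y)) val (introT andP (conj a0D ea0)))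
  => a /andP [aD ea] amax.
have zero x : x \in D -> a < x -> e x = 0.
  move=> xD ax; apply/eqP; rewrite -leqn0 leqNgt; apply/negP=> ex.
  by move: (amax x); rewrite xD ex => /(_ isT) /leq_ltn_trans /(_ ax); rewrite ltnn.
have [c1 /andP [c1D ac1]] : exists c1, (c1 \in D) && (a < c1).
  case: (boolP [exists x, (x \in D) && (a < x)]) => [/existsP //| /existsPn H]; exfalso.
  have below x : x \in D :\ a -> x < a.
    rewrite !inE=> /andP [xa xD]; have := H x; rewrite xD /= -leqNgt.
    by rewrite leq_eqVlt=> /orP [/eqP/val_inj E|//]; rewrite E eqxx in xa.
  case: (below_all below)=> Ec Es.
  have /= E1 := big_setD1_cond addn (fun x : T => x < a) (fun _ => 1) aD.
  have /= E2 := big_setD1_cond addn (fun x : T => x < a) e aD.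
  have /= E3 := big_setD1_cond addn xpredT e aD.
  rewrite ltnn -/(count_below D a) -/(count_below (D :\ a) a) in E1.
  rewrite ltnn -/(sum_below e D a) -/(sum_below e (D :\ a) a) in E2.
  rewrite !big_condT in E3.
  have cardD : #|D| = #|D :\ a|.+1 by rewrite (cardsD1 a D) aD.
  have hlt : count_below D a < #|D| by rewrite E1 add0n Ec cardD.
  have := preD a hlt; rewrite E1 E2 Ec (Es e) => h.
  move: totD; rewrite E3 cardD; move: h ea.
  set s := \sum_(i in D :\ a) e i; clear; lia.
case: (@arg_minnP _ c1 (fun y : T => (y \in D) && (a < y)) val (introT andP (conj c1D ac1)))
  => c /andP [cD ac] cmin.
exists a, c; split=> //; split=> // x xD ax; exact: (cmin x (introT andP (conj xD ax))).
Qed.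

Lemma dyck_nested_sub B C C' a e c0 : nested_at B C a -> c0 \in C ->
  (forall x, x \in C -> x \in C') -> (forall x, x \in C' -> x \in B :|: C) ->
  (forall x, x \in C' -> a < x) -> dyck C e -> dyck C' e ->
  forall x, x \in C' -> x \in C.
Proof.
move=> [aB g] c0C sub sub' aC' [totC preC] [totC' preC'] x xC'.
apply/negPn/negP=> xnC.
have P0 : (x \in C') && (x \notin C) by rewrite xC' xnC.
case: (@arg_minnP _ x (fun y : T => (y \in C') && (y \notin C)) val P0)
  => x' /andP [x'C' x'nC] x'min.
have x'B : x' \in B by move: (sub' x' x'C'); rewrite inE (negbTE x'nC) orbF.
have Cx' : forall c, c \in C -> c < x'.
  by move=> c cC; apply: (proj2 (g c cC)) x' x'B (aC' x' x'C').
have EC : forall F : T -> nat, \sum_(y in C' | y < x') F y = \sum_(y in C) F y.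
  move=> F; apply: eq_bigl=> y; case yC: (y \in C).
  - by rewrite (sub y yC) (Cx' y yC).
  - case yC': (y \in C')=> //=; apply/negP=> yx.
    by have := x'min y; rewrite yC' yC /= => /(_ isT); rewrite leqNgt yx.
have h1 : count_below C' x' = #|C| by rewrite /count_below EC sum1_card.
have h2 : sum_below e C' x' = #|C| - 1 by rewrite /sum_below EC totC.
have hlt : count_below C' x' < #|C'| by apply: (count_below_lt x'C'); rewrite ltnn.
have C0 : 0 < #|C| by apply/card_gt0P; exists c0.
by have := preC' x' hlt; rewrite h1 h2; move: C0; clear; lia.
Qed.

(* A Dyck path has no proper prefix that is itself a Dyck path, so C is determined by B :|: C
   and a. *)
Lemma dyck_nested_uniq B C B' C' a e c0 c0' : nested_at B C a -> nested_at B' C' a ->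
  B :|: C = B' :|: C' -> c0 \in C -> c0' \in C' -> dyck C e -> dyck C' e -> C = C'.
Proof.
move=> g g' EU c0C c0C' DC DC'.
have sC : forall x, x \in C -> x \in B' :|: C' by move=> x xC; rewrite -EU inE xC orbT.
have sC' : forall x, x \in C' -> x \in B :|: C by move=> x xC; rewrite EU inE xC orbT.
have aC : forall x, x \in C -> a < x by move=> x xC; case: (proj2 g x xC).
have aC' : forall x, x \in C' -> a < x by move=> x xC; case: (proj2 g' x xC).
have sub : (forall x, x \in C -> x \in C') -> C = C'.
  move=> s; apply/setP=> x; apply/idP/idP; first exact: s.
  exact: (dyck_nested_sub g c0C s sC' aC' DC DC').
case: (boolP [forall x in C, x \in C']).
- by move/forall_inP.
- rewrite negb_forall_in => /existsP [x /andP [xC xnC']].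
  have xB' : x \in B' by move: (sC x xC); rewrite inE (negbTE xnC') orbF.
  have s' : forall y, y \in C' -> y \in C.
    move=> y yC'; apply/negPn/negP=> ynC.
    have yB : y \in B by move: (sC' y yC'); rewrite inE (negbTE ynC) orbF.
    have l1 : y < x by apply: (proj2 (proj2 g' y yC')) x xB' (aC x xC).
    have l2 : x < y by apply: (proj2 (proj2 g x xC)) y yB (aC' y yC').
    by move: (ltn_trans l1 l2); rewrite ltnn.
  symmetry; apply/setP=> y; apply/idP/idP; first exact: s'.
  exact: (dyck_nested_sub g' c0C' s' sC aC DC' DC).
Qed.

End DyckPaths.

Section ChainImage.
Variable n : nat.
Local Notation T := ('I_n).
Local Notation PT := {set {set T}}.
Local Notation z := (zNC n).
Local Notation cov := (@coverNC n).
Local Notation lam := (@lamNC n).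
Implicit Types (P Q : PT) (B C : {set T}) (e : {ffun T -> nat}) (s t : seq PT).

Local Notation labels := (chain_labels z lam).

Definition label_count s : {ffun T -> nat} := [ffun a => count_mem (val a) (labels s)].
Definition chain_image s := (last z s, label_count s).

Lemma labels_rcons s Q : labels (rcons s Q) = rcons (labels s) (lam (last z s) Q).
Proof. by rewrite /chain_labels -!cats1 pairmap_cat. Qed.

Lemma label_count_rcons s Q b : lam (last z s) Q = val b ->
  label_count (rcons s Q) = incr_at (label_count s) b.
Proof.
move=> E; apply/ffunP=> x; rewrite !ffunE labels_rcons -cats1 count_cat /= E addn0.
by rewrite (inj_eq val_inj) eq_sym; case: (x == b); rewrite ?addn1 ?addn0.
Qed.

Lemma isNCDP (F : PT * {ffun T -> nat}) :
  isNCD F <-> isNC F.1 /\ forall B, B \in F.1 -> dyck B F.2.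
Proof.
split.
- by case/andP=> h /forall_inP H; split=> // B /H /isDyckP.
- by case=> h H; apply/andP; split=> //; apply/forall_inP=> B /H /isDyckP.
Qed.

Lemma isNCD_zNC : isNCD (z, [ffun _ => 0]).
Proof.
apply/isNCDP; split=> [|_ /imsetP [a _ ->]]; first exact: isNC_zNC.
split=> [|t]; first by rewrite big_set1 ffunE cards1.
by rewrite cards1 ltnS leqn0 => /eqP ->.
Qed.

Lemma isNCD_nested_merge P Q e b : isNCD (P, e) -> isNC Q -> nested_merge P Q b ->
  isNCD (Q, incr_at e b).
Proof.
move=> /isNCDP [nP DP] nQ [B [C [HB HC nBC g EQ]]]; have pP := isNC_partition nP.
apply/isNCDP; split=> //= X; rewrite EQ in_merge.
case/orP=> [/and3P [HX h1 h2]|/eqP ->].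
- apply: dyck_eq (DP X HX)=> x xX; rewrite ffunE; case: eqP=> // E.
  by case: (blocks_disjoint pP HB HX _ (proj1 g)); rewrite 1?eq_sym // -E.
- case: (block_witness pP HC)=> c0 c0C.
  exact: dyck_merge (DP B HB) (DP C HC) g c0C (blocks_disjoint pP HB HC nBC).
Qed.

Lemma isNCD_chain_image s : path cov z s -> isNCD (chain_image s).
Proof.
elim/last_ind: s=> [_|s Q IH].
  have -> : chain_image [::] = (z, [ffun _ => 0]) by congr pair; apply/ffunP=> x; rewrite !ffunE.
  exact: isNCD_zNC.
rewrite rcons_path => /andP [ps /coverNCP [_ nQ [b m Eb]]].
by rewrite /chain_image last_rcons (label_count_rcons Eb); apply: isNCD_nested_merge (IH ps) nQ m.
Qed.

Lemma cover_pred_uniq P P' Q e : cov P Q -> cov P' Q -> lam P Q = lam P' Q ->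
  isNCD (P, e) -> isNCD (P', e) -> P = P'.
Proof.
move=> /coverNCP [nP nQ [b [B [C [HB HC nBC g EQ]]] ->]].
move=> /coverNCP [nP' _ [b' [B' [C' [HB' HC' nBC' g' EQ']]] ->]] /val_inj Eb.
move=> /isNCDP [_ DP] /isNCDP [_ DP']; subst b'.
have pP := isNC_partition nP; have pP' := isNC_partition nP'.
have EU : B :|: C = B' :|: C'.
  apply: (block_eq (isNC_partition nQ) (x := b)).
  - by rewrite EQ in_merge eqxx orbT.
  - by rewrite EQ' in_merge eqxx orbT.
  - by rewrite inE (proj1 g).
  - by rewrite inE (proj1 g').
case: (block_witness pP HC) (block_witness pP' HC') => c0 c0C [c0' c0C'].
have EC : C = C' by apply: (dyck_nested_uniq g g' EU c0C c0C' (DP C HC) (DP' C' HC')).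
subst C'.
have EB : B = B'.
  apply/setP=> w; apply/idP/idP=> h.
  - have : w \in B' :|: C by rewrite -EU inE h.
    by case/setUP => // wC; case: (blocks_disjoint pP HB HC nBC h wC).
  - have : w \in B :|: C by rewrite EU inE h.
    by case/setUP => // wC; case: (blocks_disjoint pP' HB' HC' nBC' h wC).
subst B'.
by rewrite -(unmerge_merge pP HB HC nBC) -(unmerge_merge pP' HB' HC' nBC') -EQ -EQ'.
Qed.

Lemma chain_labels_inj s t : path cov z s -> path cov z t -> last z s = last z t ->
  labels s = labels t -> s = t.
Proof.
elim/last_ind: s t=> [|s Q IH] t.
- by case: t.
- case/lastP: t=> [|t Q']; first by move=> _ _ _; rewrite labels_rcons; case: (labels s).
  rewrite !rcons_path !last_rcons=> /andP [ps cQ] /andP [pt cQ'] EQ.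
  subst Q'; rewrite !labels_rcons=> /rcons_inj [El Elam].
  have Elast : last z s = last z t.
    apply: (cover_pred_uniq cQ cQ' Elam (e := label_count s)); first exact: (isNCD_chain_image ps).
    have -> : label_count s = label_count t by apply/ffunP=> a; rewrite !ffunE El.
    exact: (isNCD_chain_image pt).
  by rewrite (IH t ps pt Elast El).
Qed.

Lemma labels_lt s : path cov z s -> all (fun v => v < n) (labels s).
Proof.
elim/last_ind: s=> [|s Q IH] //; rewrite rcons_path labels_rcons all_rcons => /andP [ps cQ].
by rewrite (IH ps) andbT; case/coverNCP: cQ => _ _ [b _ ->].
Qed.

Lemma label_count_perm s t : path cov z s -> path cov z t -> label_count s = label_count t ->
  perm_eq (labels s) (labels t).
Proof.
move=> ps pt E; apply/allP=> v; rewrite mem_cat => vst.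
have vlt : v < n by case/orP: vst => [/(allP (labels_lt ps))|/(allP (labels_lt pt))].
by move/ffunP/(_ (Ordinal vlt)): E; rewrite !ffunE /= => ->.
Qed.

Local Notation chain := (chainT z cov).
Local Notation qsimNC := (@qsim PT z cov lam).

Lemma qsim_chain_image (c d : chain) : qsimNC c d -> chain_image (val c) = chain_image (val d).
Proof.
move=> cd; case: (cd) => El _; rewrite /chain_image El; congr pair.
by apply/ffunP=> a; rewrite !ffunE; apply/permP/qsim_perm.
Qed.

(* Sort both chains by quadratic exchanges: sorted chains with equal label multisets have equal
   label sequences, hence coincide. *)
Lemma chain_image_inj (c d : chain) : chain_image (val c) = chain_image (val d) -> qsimNC c d.
Proof.
move=> E.
have [c' qc so1] := qsim_sorted (@switch n) c; have [d' qd so2] := qsim_sorted (@switch n) d.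
move: E; rewrite (qsim_chain_image qc) (qsim_chain_image qd) => -[El Ecnt].
have Elabs : labels (val c') = labels (val d').
  apply: (sorted_eq (leT := geq)) so1 so2 (label_count_perm (valP c') (valP d') Ecnt).
  - by move=> a b w h1 h2; apply: leq_trans h2 h1.
  - by move=> a b /andP [h1 h2]; apply/eqP; rewrite eqn_leq; apply/andP.
have Ecd : c' = d' by apply: val_inj; apply: chain_labels_inj (valP c') (valP d') El Elabs.
by subst d'; apply: qsim_trans qc (qsim_sym qd).
Qed.

End ChainImage.

Section ChainImageSurj.
Variable n : nat.
Local Notation T := ('I_n).
Local Notation PT := {set {set T}}.
Local Notation z := (zNC n).
Local Notation cov := (@coverNC n).
Implicit Types (P : PT) (e : {ffun T -> nat}).

(* Split off from D the label that follows the last up-step of its Dyck path. *)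
Lemma isNCD_unmerge P e D : isNCD (P, e) -> D \in P -> 1 < #|D| ->
  exists P' e' b, [/\ isNCD (P', e'), nested_merge P' P b, e = incr_at e' b &
                      \sum_(x in [set: T]) e' x < \sum_(x in [set: T]) e x].
Proof.
move=> /isNCDP [nP DP] HD cardD2; have pP := isNC_partition nP.
have [a [c [aD ea zero [cD ac cmin]]]] := dyck_last_up (DP D HD) cardD2.
have [DB DC] := dyck_split (DP D HD) aD ea zero cD ac.
have aB : a \in D :\ c by rewrite !inE aD andbT; apply: contraTneq ac => ->; rewrite ltnn.
have cC : c \in [set c] by rewrite inE.
have EU : D :\ c :|: [set c] = D by rewrite setUC setD1K.
have dis x : x \in D :\ c -> x \in [set c] -> False by rewrite !inE => /andP [/negP nc _] /nc.
have g : nested_at (D :\ c) [set c] a.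
  split=> // x; rewrite inE => /eqP ->; split=> // b'; rewrite !inE => /andP [nb' b'D] ab'.
  by rewrite ltn_neqAle cmin // andbT eq_sym (inj_eq val_inj).
have [ncBC ncCB] := noncrossing_set1 (D :\ c) c.
have nP' := isNC_unmerge nP HD EU aB cC dis ncBC ncCB.
exists (unmerge P D (D :\ c) [set c]), (decr_at e a), a; split.
- apply/isNCDP; split=> // X; rewrite in_unmerge => /orP [/orP [/andP [HX nX]|/eqP ->]|/eqP ->] //.
  apply: dyck_eq (DP X HX) => x xX; rewrite ffunE; case: eqP => // E.
  by case: (blocks_disjoint pP HX HD nX xX); rewrite E.
- exists (D :\ c), [set c]; split=> //; rewrite ?in_unmerge ?eqxx ?orbT //.
  + by apply/eqP => E; apply: (dis c); rewrite ?E.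
  + by rewrite (merge_unmerge pP HD EU aB cC dis).
- by rewrite decr_atK.
- by have := sum_decr_at [set: T] xpredT ea; rewrite !big_condT inE /= addn1 => <-.
Qed.

Lemma isNCD_singletons P e : isNCD (P, e) -> (forall D, D \in P -> #|D| <= 1) ->
  P = z /\ e = [ffun _ => 0].
Proof.
move=> /isNCDP [nP DP] small; have pP := isNC_partition nP.
have blockE X x : X \in P -> x \in X -> X = [set x].
  move=> HX xX; have /cards1P [w EX] : #|X| == 1.
    by rewrite eqn_leq small // card_gt0; apply/set0Pn; exists x.
  by move: xX; rewrite EX inE => /eqP ->.
split.
- apply/setP=> W; apply/idP/imsetP => [HW|[x _ ->]].
  + by case: (block_witness pP HW) => x xW; exists x => //; apply: blockE.
  + by case: (block_cover pP x) => X HX xX; rewrite -(blockE X x).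
- apply/ffunP=> x; rewrite ffunE; case: (block_cover pP x) => X HX xX.
  by case: (DP X HX); rewrite (blockE X x) // big_set1 cards1.
Qed.

Lemma chain_image_surj P e : isNCD (P, e) -> exists2 s, path cov z s & chain_image s = (P, e).
Proof.
have [k] := ubnP (\sum_(x in [set: T]) e x); elim: k P e => // k IH P e hk H.
case: (boolP [exists D in P, 1 < #|D|]) => [/exists_inP [D HD cD]|].
- have [P' [e' [b [H' m Ee lt]]]] := isNCD_unmerge H HD cD.
  have [|s ps [El Ecnt]] := IH P' e' _ H'; first exact: leq_trans lt (ltnSE hk).
  have /isNCDP [nP' _] := H'; have /isNCDP [nP _] := H.
  have [cP lP] := coverNC_nested nP' nP m.
  exists (rcons s P); first by rewrite rcons_path ps El cP.
  by rewrite /chain_image last_rcons (label_count_rcons (b := b)) ?Ecnt -?Ee // El lP.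
- rewrite negb_exists_in => /forall_inP small.
  have [-> ->] : P = z /\ e = [ffun _ => 0].
    by apply: (isNCD_singletons H) => D HD; rewrite leqNgt small.
  by exists [::].
Qed.

End ChainImageSurj.

Section Isomorphism.
Variable n : nat.
Local Notation PT := {set {set 'I_n}}.
Local Notation z := (zNC n).
Local Notation cov := (@coverNC n).
Local Notation lam := (@lamNC n).
Local Notation chain := (chainT z cov).
Local Notation qsimNC := (@qsim PT z cov lam).
Local Notation QNC := (@Qtype PT z cov lam).

Definition chain_NCD (c : chain) : NCD n :=
  exist _ (chain_image (val c)) (isNCD_chain_image (valP c)).

Lemma mergeDP (F G : NCD n) : mergeD F G <->
  exists b, nested_merge (val F).1 (val G).1 b /\ (val G).2 = incr_at (val F).2 b.
Proof.
split.
- by case=> B [C [HB HC nBC _ [b bB [gap EQ Ee]]]]; exists b; split=> //; exists B, C.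
- case=> b [[B [C [HB HC nBC g EQ]]] Ee].
  have /isNCDP [nP _] := valP F.
  case: (block_witness (isNC_partition nP) HC) => c0 c0C.
  exists B, C; split=> //; first exact: smin_lt_nested g c0C.
  by case: g => bB gap; exists b.
Qed.

Lemma mergeD_rcons (F G : NCD n) s Q : path cov z (rcons s Q) ->
  val F = chain_image s -> val G = chain_image (rcons s Q) -> mergeD F G.
Proof.
rewrite rcons_path => /andP [_ /coverNCP [_ _ [b m Eb]]] EF EG.
apply/mergeDP; exists b; rewrite EF EG /= last_rcons; split=> //.
exact: label_count_rcons.
Qed.

Lemma mergeD_extend (F G : NCD n) s : mergeD F G -> val F = chain_image s -> path cov z s ->
  path cov z (rcons s (val G).1) /\ chain_image (rcons s (val G).1) = val G.
Proof.
case/mergeDP => b [m Ee] EF ps; rewrite EF in m Ee.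
have /isNCDP [nQ _] := valP G; have /isNCDP [nP _] := isNCD_chain_image ps.
have [cQ lQ] := coverNC_nested nP nQ m.
split; first by rewrite rcons_path ps cQ.
by rewrite /chain_image last_rcons (label_count_rcons (b := b)) // -Ee -surjective_pairing.
Qed.

Lemma NCDle_prefix (c d : chain) w : val d = val c ++ w -> NCDle (chain_NCD c) (chain_NCD d).
Proof.
elim/last_ind: w d => [|w Q IH] d Ed.
  have -> : d = c by apply: val_inj; rewrite Ed cats0.
  exact: rt_refl.
have pd := valP d; rewrite Ed -rcons_cat in pd.
have pw : path cov z (val c ++ w) by move: pd; rewrite rcons_path => /andP [].
pose d' : chain := exist _ (val c ++ w) pw.
apply: (rt_trans _ _ _ (chain_NCD d')); first exact: IH.
by apply: rt_step; apply: (mergeD_rcons pd) => //=; rewrite Ed rcons_cat.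
Qed.

Lemma qsim_chain_NCD (c d : chain) : qsimNC c d <-> chain_NCD c = chain_NCD d.
Proof.
split=> [/qsim_chain_image E|/(congr1 val)/chain_image_inj //].
exact: val_inj.
Qed.

Lemma Qtype_eq (X Y : QNC) : sval X = sval Y -> X = Y.
Proof.
apply: eq_sig_hprop => c p q.
exact: (ext_prop_dep_proof_irrel_cic propositional_extensionality).
Qed.

Definition class_of (c : chain) : QNC := exist _ (qsimNC c) (ex_intro _ c erefl).

Definition class_repr (X : QNC) : chain := sval (constructive_indefinite_description _ (svalP X)).

Lemma class_reprE (X : QNC) : sval X = qsimNC (class_repr X).
Proof. exact: svalP (constructive_indefinite_description _ (svalP X)). Qed.

Lemma class_of_eq (c d : chain) : qsimNC c d -> class_of c = class_of d.
Proof.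
move=> cd; apply: Qtype_eq; apply: functional_extensionality => w.
apply: propositional_extensionality; split=> h.
- exact: qsim_trans (qsim_sym cd) h.
- exact: qsim_trans cd h.
Qed.

Lemma class_reprK (X : QNC) : class_of (class_repr X) = X.
Proof. by apply: Qtype_eq; rewrite /= -class_reprE. Qed.

Lemma mem_class_repr (X : QNC) (c : chain) : sval X c -> qsimNC (class_repr X) c.
Proof. by rewrite class_reprE. Qed.

Definition Q_to_NCD (X : QNC) : NCD n := chain_NCD (class_repr X).

Lemma Q_to_NCD_mem (X : QNC) (c : chain) : sval X c -> Q_to_NCD X = chain_NCD c.
Proof. by move/mem_class_repr/qsim_chain_NCD. Qed.

Lemma Q_to_NCD_class (c : chain) : Q_to_NCD (class_of c) = chain_NCD c.
Proof. exact/Q_to_NCD_mem/qsim_refl. Qed.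

Lemma Q_to_NCD_inj : injective Q_to_NCD.
Proof.
move=> X Y /qsim_chain_NCD E.
by rewrite -(class_reprK X) -(class_reprK Y); apply: class_of_eq.
Qed.

Lemma chain_NCD_surj (F : NCD n) : exists c : chain, chain_NCD c = F.
Proof.
case: F => [[P e] HF]; have [s ps Es] := chain_image_surj HF.
by exists (exist _ s ps); apply: val_inj.
Qed.

Definition NCD_to_Q (F : NCD n) : QNC :=
  class_of (sval (constructive_indefinite_description _ (chain_NCD_surj F))).

Lemma NCD_to_QK : cancel NCD_to_Q Q_to_NCD.
Proof.
move=> F; rewrite /NCD_to_Q Q_to_NCD_class.
exact: svalP (constructive_indefinite_description _ (chain_NCD_surj F)).
Qed.

Lemma Qle_refl (X : QNC) : Qle X X.
Proof.
have cX : sval X (class_repr X) by rewrite class_reprE; apply: qsim_refl.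
by apply: t_step; exists (class_repr X), (class_repr X); split.
Qed.

Lemma Qle_NCDle (X Y : QNC) : Qle X Y -> NCDle (Q_to_NCD X) (Q_to_NCD Y).
Proof.
elim=> [{}X {}Y [c [d [cX dY sub]]]|{}X Y' {}Y _ h1 _ h2]; last exact: rt_trans h1 h2.
rewrite (Q_to_NCD_mem cX) (Q_to_NCD_mem dY).
have [w Ew] := path_subset_prefix (@card_coverNC n) (valP c) (valP d) sub.
exact: NCDle_prefix Ew.
Qed.

Lemma NCDle_Qle (F G : NCD n) : NCDle F G ->
  forall X, Q_to_NCD X = F -> exists2 Y, Q_to_NCD Y = G & Qle X Y.
Proof.
elim=> [{}F {}G m|{}F|{}F F' {}G _ IH1 _ IH2] X EX.
- have EF : val F = chain_image (val (class_repr X)) by rewrite -EX.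
  have [pd Ed] := mergeD_extend m EF (valP (class_repr X)).
  pose d : chain := exist _ (rcons (val (class_repr X)) (val G).1) pd.
  exists (class_of d); first by rewrite Q_to_NCD_class; apply: val_inj.
  apply: t_step; exists (class_repr X), d; split; last 1 first.
  + by move=> x; rewrite /full_chain /= !in_cons mem_rcons in_cons => /orP [->|->]; rewrite ?orbT.
  + by rewrite class_reprE; apply: qsim_refl.
  + exact: qsim_refl.
- by exists X => //; apply: Qle_refl.
- have [Y1 E1 l1] := IH1 X EX; have [Y2 E2 l2] := IH2 Y1 E1.
  by exists Y2 => //; apply: t_trans l1 l2.
Qed.

End Isomorphism.

(* The proof does not use [hn]: for n = 0 both posets are singletons. *)
Theorem theorem5p7 (n : nat) (hn : 0 < n) :
  poset_iso (@Qle _ (zNC n) (@coverNC n) (@lamNC n)) (@NCDle n).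
Proof.
exists (@Q_to_NCD n); split.
  exists (@NCD_to_Q n); last exact: NCD_to_QK.
  by move=> X; apply: Q_to_NCD_inj; rewrite NCD_to_QK.
move=> X Y; split; first exact: Qle_NCDle.
by case/NCDle_Qle/(_ X erefl) => Y' /Q_to_NCD_inj <-.
Qed.
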